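(* Let $S$ be a monoid whose unique maximal right ideal $\mathfrak{M}$ is two-sided, and let $A$ be a finitely generated quasi-strongly faithful right $S$-act. If $X$ and $Y$ are minimal generating sets for $A$, then $|X|=|Y|$.
   Context: $S$ is a monoid with identity $1$ having at least one right non-invertible element. A (right) $S$-act is a nonempty set with an action $(a,s)\mapsto as$, $a1=a$, $a(st)=(as)t$. $X\subseteq A$ generates $A$ if $A=\bigcup_{x\in X}xS$; it is minimal if no proper subset generates $A$; $A$ is finitely generated if it has a finite generating set. $\mathfrak{M}=\{s\in S\mid st\neq1\ \forall t\in S\}$ is the unique maximal right ideal. $A$ is quasi-strongly faithful if for $a\in A$ (with $a\neq\theta$ when $A$ has a unique zero $\theta$, i.e. $\theta s=\theta$ for all $s$) and $s\in S$, $as=a$ implies $s\notin\mathfrak{M}$. *)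

From Stdlib Require Import List.

Set Implicit Arguments.

Definition is_monoid (S : Type) (mul : S -> S -> S) (one : S) : Prop :=
  (forall x y z, mul x (mul y z) = mul (mul x y) z) /\
  (forall x, mul one x = x) /\ (forall x, mul x one = x).

Definition right_invertible (S : Type) (mul : S -> S -> S) (one : S) (s : S) : Prop :=
  exists t, mul s t = one.

Definition maxRideal (S : Type) (mul : S -> S -> S) (one : S) (s : S) : Prop :=
  forall t, mul s t <> one.

Definition two_sided (S : Type) (mul : S -> S -> S) (P : S -> Prop) : Prop :=
  (forall s t, P s -> P (mul s t)) /\ (forall s t, P s -> P (mul t s)).

Definition is_right_act (S A : Type) (mul : S -> S -> S) (one : S)
  (act : A -> S -> A) : Prop :=
  inhabited A /\ (forall a, act a one = a) /\
  (forall a s t, act a (mul s t) = act (act a s) t).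

Definition generates (S A : Type) (act : A -> S -> A) (X : A -> Prop) : Prop :=
  forall a, exists x s, X x /\ act x s = a.

Definition minimal_generating (S A : Type) (act : A -> S -> A) (X : A -> Prop) : Prop :=
  generates act X /\
  forall Y : A -> Prop, (forall a, Y a -> X a) -> generates act Y ->
    forall a, X a -> Y a.

Definition finitely_generated (S A : Type) (act : A -> S -> A) : Prop :=
  exists l : list A, generates act (fun a => In a l).

Definition is_zero (S A : Type) (act : A -> S -> A) (theta : A) : Prop :=
  forall s, act theta s = theta.

Definition is_unique_zero (S A : Type) (act : A -> S -> A) (theta : A) : Prop :=
  is_zero act theta /\ forall b, is_zero act b -> b = theta.

Definition quasi_strongly_faithful (S A : Type) (mul : S -> S -> S) (one : S)
  (act : A -> S -> A) : Prop :=
  forall (a : A) (s : S), ~ is_unique_zero act a -> act a s = a ->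
    ~ maxRideal mul one s.

Definition same_card (A : Type) (X Y : A -> Prop) : Prop :=
  exists (f : {x | X x} -> {y | Y y}) (g : {y | Y y} -> {x | X x}),
    (forall x, g (f x) = x) /\ (forall y, f (g y) = y).

(* No element of a minimal generating set lies in the cyclic subact of
   another, since it would then be redundant.  Given
   minimal generating sets X and Y and x in X, write x = y s with y in Y and
   y = x' t with x' in X; then x' (t s) = x forces x' = x, so x (t s) = x.
   Quasi-strong faithfulness puts t s outside M, and since M is a left ideal
   also s lies outside M, i.e. s is right invertible and y lies in xS.  Thus
   x and y generate the same cyclic subact, and this relation matches X with
   Y bijectively. *)
From Stdlib Require Import Classical ClassicalEpsilon ProofIrrelevance.

Set Implicit Arguments.

Definition same_cyclic_subact (S A : Type) (act : A -> S -> A) (x y : A) : Prop :=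
  (exists s, act x s = y) /\ (exists t, act y t = x).

Lemma same_cyclic_subact_sym (S A : Type) (act : A -> S -> A) (x y : A) :
  same_cyclic_subact act x y -> same_cyclic_subact act y x.
Proof. intros [Hxy Hyx]; split; assumption. Qed.

Lemma same_card_of_bijective_relation (A : Type) (X Y : A -> Prop)
  (R : A -> A -> Prop) :
  (forall x, X x -> exists y, Y y /\ R x y) ->
  (forall y, Y y -> exists x, X x /\ R x y) ->
  (forall x y y', X x -> Y y -> Y y' -> R x y -> R x y' -> y = y') ->
  (forall x x' y, X x -> X x' -> Y y -> R x y -> R x' y -> x = x') ->
  same_card X Y.
Proof.
  intros totX totY uniqY uniqX.
  set (f := fun x : {x | X x} =>
    let (y, Hy) := constructive_indefinite_description _ (totX _ (proj2_sig x)) in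
    exist Y y (proj1 Hy)).
  set (g := fun y : {y | Y y} =>
    let (x, Hx) := constructive_indefinite_description _ (totY _ (proj2_sig y)) in
    exist X x (proj1 Hx)).
  assert (Rf : forall x, R (proj1_sig x) (proj1_sig (f x))).
  { intro x; unfold f.
    destruct constructive_indefinite_description as [y [Yy Ry]]; exact Ry. }
  assert (Rg : forall y, R (proj1_sig (g y)) (proj1_sig y)).
  { intro y; unfold g.
    destruct constructive_indefinite_description as [x [Xx Rx]]; exact Rx. }
  exists f, g; split.
  - intros x; apply eq_sig_hprop; [intros; apply proof_irrelevance|].
    apply (uniqX _ _ (proj1_sig (f x))); auto; apply proj2_sig.
  - intros y; apply eq_sig_hprop; [intros; apply proof_irrelevance|].
    apply (uniqY (proj1_sig (g y))); auto; apply proj2_sig.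
Qed.

Lemma right_invertible_of_not_maxRideal (S : Type) (mul : S -> S -> S) (one : S)
  (s : S) :
  ~ maxRideal mul one s -> right_invertible mul one s.
Proof.
  intros Hs; apply not_all_not_ex; intros Hnone; apply Hs.
  intros t Ht; exact (Hnone t Ht).
Qed.

Section MinimalGenerating.

Context {S A : Type} {mul : S -> S -> S} {one : S} {act : A -> S -> A}.
Hypothesis act_one : forall a, act a one = a.
Hypothesis act_mul : forall a s t, act a (mul s t) = act (act a s) t.

Lemma same_cyclic_subact_trans {x y z : A} :
  same_cyclic_subact act x y -> same_cyclic_subact act y z ->
  same_cyclic_subact act x z.
Proof.
  intros [[s Hs] [t Ht]] [[s' Hs'] [t' Ht']]; split.
  - exists (mul s s'); rewrite act_mul, Hs; exact Hs'.
  - exists (mul t' t); rewrite act_mul, Ht'; exact Ht.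
Qed.

Lemma minimal_generating_eq_of_act (Z : A -> Prop) {z z' : A} {s : S} :
  minimal_generating act Z -> Z z -> Z z' -> act z' s = z -> z = z'.
Proof.
  intros [HZgen HZmin] Zz Zz' Hs.
  apply NNPP; intros Hne.
  assert (Hgen : generates act (fun a => Z a /\ a <> z)).
  { intros a; destruct (HZgen a) as [w [r [Zw Hw]]].
    destruct (classic (w = z)) as [->|Hwz].
    - exists z', (mul s r); split; [split; auto|].
      rewrite act_mul, Hs; exact Hw.
    - exists w, r; auto. }
  exact (proj2 (HZmin _ (fun a Ha => proj1 Ha) Hgen z Zz) eq_refl).
Qed.

Lemma minimal_generating_eq_of_same_cyclic_subact (Z : A -> Prop) {y y' : A} :
  minimal_generating act Z -> Z y -> Z y' -> same_cyclic_subact act y y' ->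
  y = y'.
Proof.
  intros HZ Zy Zy' [_ [t Ht]].
  exact (minimal_generating_eq_of_act HZ Zy Zy' Ht).
Qed.

Hypothesis HM : two_sided mul (maxRideal mul one).
Hypothesis Hqsf : quasi_strongly_faithful mul one act.

Lemma minimal_generating_same_cyclic_subact (X Y : A -> Prop) {x : A} :
  minimal_generating act X -> minimal_generating act Y -> X x ->
  exists y, Y y /\ same_cyclic_subact act x y.
Proof.
  intros HX HY Xx.
  destruct (proj1 HY x) as [y [s [Yy Hs]]].
  destruct (proj1 HX y) as [x' [t [Xx' Ht]]].
  assert (Hx'x : act x' (mul t s) = x) by (rewrite act_mul, Ht; exact Hs).
  assert (x = x') as <- by exact (minimal_generating_eq_of_act HX Xx Xx' Hx'x).
  exists y; split; [exact Yy|].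
  destruct (classic (is_unique_zero act x)) as [[Hzero _]|Hnz].
  - assert (y = x) as -> by (rewrite <- Ht; apply Hzero).
    split; exists one; apply act_one.
  - assert (Hts : ~ maxRideal mul one (mul t s)) by exact (Hqsf Hnz Hx'x).
    assert (Hsinv : right_invertible mul one s).
    { apply right_invertible_of_not_maxRideal; intros Ms.
      exact (Hts (proj2 HM s t Ms)). }
    destruct Hsinv as [v Hv].
    split; [exists v | exists s; exact Hs].
    rewrite <- Hs, <- act_mul, Hv; apply act_one.
Qed.

End MinimalGenerating.

Theorem corollary3p5 (S A : Type) (mul : S -> S -> S) (one : S)
  (act : A -> S -> A)
  (HS : is_monoid mul one)
  (Hnoninv : exists s : S, ~ right_invertible mul one s)
  (HA : is_right_act mul one act)
  (HM : two_sided mul (maxRideal mul one))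
  (Hfg : finitely_generated act)
  (Hqsf : quasi_strongly_faithful mul one act)
  (X Y : A -> Prop)
  (HX : minimal_generating act X) (HY : minimal_generating act Y) :
  same_card X Y.
Proof.
  destruct HA as [_ [act_one act_mul]].
  apply same_card_of_bijective_relation with (R := same_cyclic_subact act).
  - intros x Xx.
    exact (minimal_generating_same_cyclic_subact act_one act_mul HM Hqsf HX HY Xx).
  - intros y Yy.
    destruct (minimal_generating_same_cyclic_subact act_one act_mul HM Hqsf HY HX Yy)
      as [x [Xx Hyx]].
    exists x; split; [exact Xx | exact (same_cyclic_subact_sym Hyx)].
  - intros x y y' _ Yy Yy' Hxy Hxy'.
    apply (minimal_generating_eq_of_same_cyclic_subact act_mul HY Yy Yy').
    exact (same_cyclic_subact_trans act_mul (same_cyclic_subact_sym Hxy) Hxy').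
  - intros x x' y Xx Xx' _ Hxy Hx'y.
    apply (minimal_generating_eq_of_same_cyclic_subact act_mul HX Xx Xx').
    exact (same_cyclic_subact_trans act_mul Hxy (same_cyclic_subact_sym Hx'y)).
Qed.
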